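(* Let $i\in\{3',3'',4\}$ and let $\tau$ be a finite topology on a finite set $X$. Then there exists a finite topology $\tau'$ on $X$ such that $G_i(\tau)\cong G_i(\tau')$ and the height of $\tau'$ is at most $3$.
   Context: A finite topology on $X$ is a family of subsets (open sets) containing $\emptyset,X$ and closed under unions and intersections; complements of open sets are closed. $m_\tau(x)$ is the intersection of all open sets containing $x$. The height of $\tau$ is the largest $h$ such that there are distinct $v_1,\dots,v_h\in X$ with $m_\tau(v_1)\subseteq\cdots\subseteq m_\tau(v_h)$. For distinct $x,y$, let (a): exist closed $J$, open $U_J,U_y$ with $x\in J\subseteq U_J$, $y\in U_y$, $U_J\cap U_y=\emptyset$; (b): exist closed $K$, open $U_x,U_K$ with $x\in U_x$, $y\in K\subseteq U_K$, $U_x\cap U_K=\emptyset$. $x,y$ are $T_{3'}$-separated if (a) or (b), $T_{3''}$-separated if (a) and (b), $T_4$-separated if there exist closed $J\ni x$, $K\ni y$ and disjoint open $U_J\supseteq J$, $U_K\supseteq K$. $G_i(\tau)$ is the simple graph on $X$ where distinct $x,y$ are adjacent iff not $T_i$-separated. *)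

From mathcomp Require Import all_boot.
Set Implicit Arguments. Unset Strict Implicit. Unset Printing Implicit Defensive.

Section FiniteTopology.
Variable X : finType.

Definition is_topology (tau : {set {set X}}) : Prop :=
  [/\ set0 \in tau, setT \in tau &
      forall U V, U \in tau -> V \in tau -> (U :|: V \in tau) /\ (U :&: V \in tau)].

Definition is_open (tau : {set {set X}}) (U : {set X}) : Prop := U \in tau.
Definition is_closed (tau : {set {set X}}) (C : {set X}) : Prop := ~: C \in tau.

Definition mset (tau : {set {set X}}) (x : X) : {set X} :=
  \bigcap_(U in tau | x \in U) U.

Definition height_chain (tau : {set {set X}}) (s : seq X) : Prop :=
  uniq s /\ sorted (fun a b => mset tau a \subset mset tau b) s.

Definition height_le (tau : {set {set X}}) (h : nat) : Prop :=
  forall s : seq X, height_chain tau s -> size s <= h.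

Definition sep_a (tau : {set {set X}}) (x y : X) : Prop :=
  exists J UJ Uy : {set X},
    is_closed tau J /\ is_open tau UJ /\ is_open tau Uy /\
    x \in J /\ J \subset UJ /\ y \in Uy /\ UJ :&: Uy = set0.

Definition sep_b (tau : {set {set X}}) (x y : X) : Prop :=
  exists K Ux UK : {set X},
    is_closed tau K /\ is_open tau Ux /\ is_open tau UK /\
    x \in Ux /\ y \in K /\ K \subset UK /\ Ux :&: UK = set0.

Definition T3'_sep (tau : {set {set X}}) (x y : X) : Prop := sep_a tau x y \/ sep_b tau x y.
Definition T3''_sep (tau : {set {set X}}) (x y : X) : Prop := sep_a tau x y /\ sep_b tau x y.
Definition T4_sep (tau : {set {set X}}) (x y : X) : Prop :=
  exists J K UJ UK : {set X},
    is_closed tau J /\ is_closed tau K /\ is_open tau UJ /\ is_open tau UK /\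
    x \in J /\ y \in K /\ J \subset UJ /\ K \subset UK /\ UJ :&: UK = set0.
End FiniteTopology.

Inductive sep_kind := T3' | T3'' | T4.

Definition separated (i : sep_kind) (X : finType) (tau : {set {set X}}) (x y : X) : Prop :=
  match i with
  | T3' => T3'_sep tau x y
  | T3'' => T3''_sep tau x y
  | T4 => T4_sep tau x y
  end.

Definition G_adj (i : sep_kind) (X : finType) (tau : {set {set X}}) (x y : X) : Prop :=
  x <> y /\ ~ separated i tau x y.

Definition graph_iso (X : finType) (e1 e2 : X -> X -> Prop) : Prop :=
  exists f : X -> X, bijective f /\ forall x y, e1 x y <-> e2 (f x) (f y).

(* The open sets of a finite topology are exactly the down-sets of its
   specialization preorder (a <= b iff a \in m(b)), and the closed sets are
   the up-sets.  The smallest open set containing the closure of x is the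
   hull of x, the set of points having a common upper bound with x; hence (a)
   holds for (x, y) iff the hull of x misses the down-set of y, and T4 iff the
   hulls of x and y are disjoint.
   Flatten the preorder: keep one representative of each minimal class at
   level 0, the other maximal points at level 2 and all remaining points at
   level 1, a point lying below a point of higher level iff it did before.
   Chains then have at most 3 points.  Every point lies above a
   representative, and a representative sharing an upper bound z with x
   still shares one in the flattened order (x itself, or a maximal point
   above z), so hulls and down-sets meet exactly as before: the identity is
   an isomorphism of each G_i. *)

From mathcomp Require Import all_boot.
Set Implicit Arguments. Unset Strict Implicit. Unset Printing Implicit Defensive.

Section RelationSets.
Variables (X : finType) (le : rel X).

Definition down y := [set w | le w y].
Definition up x := [set z | le x z].
Definition hull x := [set w | [exists z, le x z && le w z]].
Definition downsets :=
  [set U : {set X} | [forall a, forall b, le a b ==> (b \in U) ==> (a \in U)]].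

Lemma downsetsP (U : {set X}) :
  reflect (forall a b, le a b -> b \in U -> a \in U) (U \in downsets).
Proof.
rewrite inE; apply: (iffP forallP) => [dU a b ab bU | dU a].
  by move: (dU a) => /forallP /(_ b); rewrite ab bU.
by apply/forallP => b; apply/implyP => /dU aU; apply/implyP.
Qed.

Lemma downsets_topology : is_topology downsets.
Proof.
split; try by apply/downsetsP => a b; rewrite ?inE.
move=> U V /downsetsP dU /downsetsP dV.
split; apply/downsetsP => a b ab; rewrite !inE.
  by case/orP => [/(dU a b ab) -> | /(dV a b ab) ->]; rewrite ?orbT.
by case/andP => /(dU a b ab) -> /(dV a b ab) ->.
Qed.

Definition rel_separated (i : sep_kind) x y : Prop :=
  match i with
  | T3' => [disjoint hull x & down y] \/ [disjoint hull y & down x]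
  | T3'' => [disjoint hull x & down y] /\ [disjoint hull y & down x]
  | T4 => [disjoint hull x & hull y]
  end.

Lemma hull_downward x a b : transitive le -> le a b -> b \in hull x -> a \in hull x.
Proof.
move=> le_trans ab; rewrite !inE => /existsP [z /andP [xz bz]].
by apply/existsP; exists z; rewrite xz (le_trans _ _ _ ab bz).
Qed.

End RelationSets.

Section Subrelation.
Variables (X : finType) (le1 le2 : rel X).

Lemma hull_subrel x : subrel le1 le2 -> hull le1 x \subset hull le2 x.
Proof.
move=> le12; apply/subsetP => w; rewrite !inE => /existsP [z /andP [xz wz]].
by apply/existsP; exists z; rewrite !le12.
Qed.

Lemma down_subrel y : subrel le1 le2 -> down le1 y \subset down le2 y.
Proof. by move=> le12; apply/subsetP => w; rewrite !inE => /le12. Qed.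

Lemma eq_rel_separated i x y :
  le1 =2 le2 -> rel_separated le1 i x y <-> rel_separated le2 i x y.
Proof.
move=> le12.
have eq_hull z : hull le1 z = hull le2 z.
  by apply/setP => w; rewrite !inE; apply: eq_existsb => t; rewrite !le12.
have eq_down z : down le1 z = down le2 z by apply/setP => w; rewrite !inE le12.
by case: i; rewrite /= !eq_hull ?eq_down.
Qed.

End Subrelation.

Section Specialization.
Variables (X : finType) (tau : {set {set X}}).

Definition spec : rel X := fun a b => a \in mset tau b.

Lemma spec_refl : reflexive spec.
Proof. by move=> x; apply/bigcapP => U /andP []. Qed.

Lemma mset_min (U : {set X}) x : U \in tau -> x \in U -> mset tau x \subset U.
Proof. by move=> tU xU; apply/subsetP => a /bigcapP; apply; rewrite tU xU. Qed.

Hypothesis tau_top : is_topology tau.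

Lemma mset_open x : mset tau x \in tau.
Proof.
case: tau_top => _ tT tUI.
apply: (big_ind (fun U => U \in tau)) => // [U V tU tV | U /andP [] //].
exact: (tUI _ _ tU tV).2.
Qed.

Lemma spec_trans : transitive spec.
Proof. by move=> b a c ab bc; apply: subsetP (mset_min (mset_open c) bc) a ab. Qed.

Lemma mset_subset_spec a b : (mset tau a \subset mset tau b) = spec a b.
Proof.
apply/idP/idP => [ab | ]; first exact: subsetP ab a (spec_refl a).
exact: mset_min (mset_open b).
Qed.

Lemma topology_downsets : tau = downsets spec.
Proof.
apply/setP => U; apply/idP/downsetsP => [tU a b ab bU | dU].
  exact: subsetP (mset_min tU bU) a ab.
have -> : U = \bigcup_(b in U) mset tau b.
  apply/setP => a; apply/idP/bigcupP => [aU | [b bU ab]]; last exact: dU ab bU.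
  by exists a => //; apply: spec_refl.
case: tau_top => t0 _ tUI.
apply: (big_ind (fun U => U \in tau)) => // [V W tV tW | b _].
  exact: (tUI _ _ tV tW).1.
exact: mset_open.
Qed.

Lemma openP (U : {set X}) :
  reflect (forall a b, spec a b -> b \in U -> a \in U) (U \in tau).
Proof. by rewrite {1}topology_downsets; apply: downsetsP. Qed.

Lemma closed_upward J x z : is_closed tau J -> x \in J -> spec x z -> z \in J.
Proof.
move=> /openP cJ xJ xz; apply: contraT => zJ.
by have := cJ x z xz; rewrite !inE xJ; apply.
Qed.

Lemma up_closed x : is_closed tau (up spec x).
Proof.
apply/openP => a b ab; rewrite !inE; apply: contra => xa.
exact: spec_trans xa ab.
Qed.

Lemma hull_open x : hull spec x \in tau.
Proof. by apply/openP => a b; apply: hull_downward spec_trans. Qed.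

Lemma down_spec y : down spec y = mset tau y.
Proof. by apply/setP => w; rewrite inE. Qed.

Lemma up_subset_hull x : up spec x \subset hull spec x.
Proof.
apply/subsetP => z; rewrite !inE => xz.
by apply/existsP; exists z; rewrite xz spec_refl.
Qed.

Lemma hull_subset_open J U x :
  is_closed tau J -> U \in tau -> x \in J -> J \subset U -> hull spec x \subset U.
Proof.
move=> cJ tU xJ JU; apply/subsetP => w; rewrite inE => /existsP [z /andP [xz wz]].
by apply: (openP _ tU) wz _; apply: subsetP JU z (closed_upward cJ xJ xz).
Qed.

Lemma sep_aE x y : sep_a tau x y <-> [disjoint hull spec x & down spec y].
Proof.
split=> [[J [UJ [Uy [cJ [tUJ [tUy [xJ [JUJ [yUy UJUy]]]]]]]]] | dis].
  have dis : [disjoint UJ & Uy] by rewrite -setI_eq0 UJUy.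
  by rewrite down_spec; apply: disjointW dis; [apply: hull_subset_open cJ tUJ xJ JUJ |
    apply: mset_min tUy yUy].
exists (up spec x), (hull spec x), (down spec y).
rewrite down_spec in dis *.
split; first exact: up_closed.
split; first exact: hull_open.
split; first exact: mset_open.
split; first by rewrite inE spec_refl.
split; first exact: up_subset_hull.
split; first exact: spec_refl.
by apply/eqP; rewrite setI_eq0.
Qed.

Lemma sep_bE x y : sep_b tau x y <-> sep_a tau y x.
Proof.
by split=> [] [K [U [V [? [? [? [? [? [? UV]]]]]]]]]; exists K, V, U; rewrite setIC.
Qed.

Lemma T4_sepE x y : T4_sep tau x y <-> [disjoint hull spec x & hull spec y].
Proof.
split=> [[J [K [UJ [UK [cJ [cK [tUJ [tUK [xJ [yK [JUJ [KUK UJUK]]]]]]]]]]]] | dis].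
  have dis : [disjoint UJ & UK] by rewrite -setI_eq0 UJUK.
  exact: disjointW (hull_subset_open cJ tUJ xJ JUJ) (hull_subset_open cK tUK yK KUK) dis.
exists (up spec x), (up spec y), (hull spec x), (hull spec y).
do 2 (split; first exact: up_closed).
do 2 (split; first exact: hull_open).
do 2 (split; first by rewrite inE spec_refl).
do 2 (split; first exact: up_subset_hull).
by apply/eqP; rewrite setI_eq0.
Qed.

Lemma separated_spec i x y : separated i tau x y <-> rel_separated spec i x y.
Proof.
have := sep_aE x y; have := sep_aE y x; have := sep_bE x y; have := T4_sepE x y.
by case: i; rewrite /= /T3'_sep /T3''_sep; tauto.
Qed.

End Specialization.

Section Preorder.
Variables (X : finType) (le : rel X).
Hypotheses (le_refl : reflexive le) (le_trans : transitive le).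
Arguments le_trans {y x z}.

Lemma spec_downsets : spec (downsets le) =2 le.
Proof.
move=> a b; apply/bigcapP/idP => [ab | ab U /andP [/downsetsP dU bU]].
  have := ab (down le b); rewrite [b \in _]inE [a \in _]inE le_refl andbT; apply.
  by apply/downsetsP => c d cd; rewrite !inE => /(le_trans cd).
exact: dU ab bU.
Qed.

Definition minimal a := [forall b, le b a ==> le a b].

Lemma minimal_le a b : minimal a -> le b a -> le a b.
Proof. by move=> /forallP /(_ b) /implyP. Qed.

Lemma down_subset a b : le a b -> down le a \subset down le b.
Proof. by move=> ab; apply/subsetP => c; rewrite !inE => /le_trans; apply. Qed.

Lemma exists_minimal_below x : exists2 m, minimal m & le m x.
Proof.
have [m mx m_min] := @arg_minnP _ x (fun m => le m x) (fun m => #|down le m|) (le_refl x).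
exists m => //; apply/forallP => b; apply/implyP => bm.
have /eqP down_bm : down le b == down le m.
  by rewrite eqEcard down_subset //= m_min // (le_trans bm mx).
have : m \in down le m by rewrite inE.
by rewrite -down_bm inE.
Qed.

End Preorder.

Definition maximal (X : finType) (le : rel X) := minimal (fun a b => le b a).

Section Flatten.
Variables (X : finType) (le : rel X).
Hypotheses (le_refl : reflexive le) (le_trans : transitive le).
Arguments le_trans {y x z}.

Lemma exists_maximal_above x : exists2 m, maximal le m & le x m.
Proof.
apply: (exists_minimal_below (le := fun a b => le b a)) => // b a c ba cb.
exact: le_trans cb ba.
Qed.

(* A single point per minimal class: equivalent points would form long chains. *)
Definition rep r := minimal le r && [forall a, le a r ==> (enum_rank r <= enum_rank a)%N].
Definition top a := ~~ rep a && maximal le a.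
Definition flatten : rel X := fun a b =>
  [|| a == b, rep a && le a b | [&& ~~ rep a, ~~ top a, top b & le a b]].

Lemma rep_minimal r a : rep r -> le a r -> le r a.
Proof. by move=> /andP [min_r _]; apply: minimal_le. Qed.

Lemma rep_uniq r s : rep r -> rep s -> le r s -> r = s.
Proof.
move=> rep_r rep_s rs; have sr := rep_minimal rep_s rs.
move: rep_r rep_s => /andP [_ /forallP /(_ s) /implyP /(_ sr) r_s].
move=> /andP [_ /forallP /(_ r) /implyP /(_ rs) s_r].
by apply/enum_rank_inj/ord_inj/eqP; rewrite eqn_leq r_s s_r.
Qed.

Lemma exists_rep_below x : exists2 r, rep r & le r x.
Proof.
have [m min_m mx] := exists_minimal_below le_refl (@le_trans) x.
have [r rm r_least] := @arg_minnP _ m (fun a => le a m) (fun a => val (enum_rank a)) (le_refl m).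
exists r; last exact: le_trans rm mx.
apply/andP; split.
  apply/forallP => b; apply/implyP => br.
  exact: le_trans rm (minimal_le min_m (le_trans br rm)).
apply/forallP => a; apply/implyP => ar; exact: r_least (le_trans ar rm).
Qed.

Lemma flatten_refl : reflexive flatten.
Proof. by move=> a; rewrite /flatten eqxx. Qed.

Lemma flatten_sub : subrel flatten le.
Proof. by move=> a b /or3P [/eqP -> | /andP [] | /and4P []]. Qed.

Lemma flatten_trans : transitive flatten.
Proof.
move=> b a c; rewrite /flatten => /or3P [/eqP -> // | /andP [ra ab] | /and4P [ra ta tb ab]].
  by move=> /flatten_sub bc; rewrite ra (le_trans ab bc) orbT.
move=> /or3P [/eqP <- | /andP [rb _] | /and4P [_ tb' _ _]].
- by rewrite ra ta tb ab !orbT.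
- by move: tb; rewrite /top rb.
- by rewrite tb in tb'.
Qed.

Lemma rep_flatten r b : rep r -> le r b -> flatten r b.
Proof. by move=> rep_r rb; rewrite /flatten rep_r rb orbT. Qed.

Lemma hull_flatten_rep x w : rep w -> w \in hull le x -> w \in hull flatten x.
Proof.
move=> rep_w; rewrite !inE => /existsP [z /andP [xz wz]].
have [m max_m zm] := exists_maximal_above z.
have [xm wm] := (le_trans xz zm, le_trans wz zm).
apply/existsP; case: (boolP (rep m || top x)) => [m_rep_or_x_top | ].
  exists x; rewrite flatten_refl rep_flatten //; apply: le_trans wm _.
  case/orP: m_rep_or_x_top => [rep_m | /andP [_ max_x]]; first exact: rep_minimal.
  exact: minimal_le max_x xm.
rewrite negb_or => /andP [nrep_m ntop_x]; have top_m : top m by rewrite /top nrep_m.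
exists m; rewrite (rep_flatten rep_w wm) andbT /flatten top_m (negbTE ntop_x) xm.
by case: (rep x); rewrite !orbT.
Qed.

Lemma disjoint_hull_down_flatten x y :
  [disjoint hull flatten x & down flatten y] = [disjoint hull le x & down le y].
Proof.
apply/idP/idP => [dis | ]; last first.
  by apply: disjointW; [apply: hull_subrel | apply: down_subrel]; apply: flatten_sub.
apply/pred0P => w /=; apply/negbTE/andP => -[wx]; rewrite inE => wy.
have [r rep_r rw] := exists_rep_below w.
have := disjointFr dis (hull_flatten_rep rep_r (hull_downward (@le_trans) rw wx)).
by rewrite inE rep_flatten // (le_trans rw wy).
Qed.

Lemma disjoint_hull_hull_flatten x y :
  [disjoint hull flatten x & hull flatten y] = [disjoint hull le x & hull le y].
Proof.
apply/idP/idP => [dis | ]; last by apply: disjointW; apply: hull_subrel; apply: flatten_sub.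
apply/pred0P => w /=; apply/negbTE/andP => -[wx wy].
have [r rep_r rw] := exists_rep_below w.
have := disjointFr dis (hull_flatten_rep rep_r (hull_downward (@le_trans) rw wx)).
by rewrite (hull_flatten_rep rep_r (hull_downward (@le_trans) rw wy)).
Qed.

Lemma flatten_separated i x y : rel_separated flatten i x y <-> rel_separated le i x y.
Proof. by case: i; rewrite /= ?disjoint_hull_down_flatten ?disjoint_hull_hull_flatten. Qed.

Definition level a := if rep a then 0 else if top a then 2 else 1.

Lemma level_flatten a b : flatten a b -> a != b -> level a < level b.
Proof.
rewrite /flatten /level => /or3P [/eqP -> | /andP [ra ab] | /and4P [ra ta tb _]].
- by rewrite eqxx.
- case: (boolP (rep b)) => [rb | _]; last by rewrite ra; case: (top b).
  by rewrite (rep_uniq ra rb ab) eqxx.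
- by move: (tb) => /andP [/negbTE rb _]; rewrite (negbTE ra) (negbTE ta) rb tb.
Qed.

Lemma path_flatten_size x s : uniq (x :: s) -> path flatten x s -> size s + level x <= 2.
Proof.
elim: s x => [x _ _ | y s IHs x] /=; first by rewrite /level; case: (rep x); case: (top x).
move=> /andP [x_notin uniq_ys] /andP [fxy path_ys].
have xy : x != y by apply: contraNneq x_notin => ->; rewrite mem_head.
rewrite addSn -addnS; apply: leq_trans (IHs y uniq_ys path_ys).
by rewrite leq_add2l; apply: level_flatten.
Qed.

Lemma sorted_flatten_size s : uniq s -> sorted flatten s -> size s <= 3.
Proof.
case: s => // x s uniq_xs /(path_flatten_size uniq_xs) le2.
by rewrite /= ltnS (leq_trans (leq_addr _ _) le2).
Qed.

End Flatten.

Theorem lemma3p6 (i : sep_kind) (X : finType) (tau : {set {set X}}) :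
  is_topology tau ->
  exists tau' : {set {set X}},
    [/\ is_topology tau', graph_iso (G_adj i tau) (G_adj i tau') & height_le tau' 3].
Proof.
move=> tau_top; pose le := spec tau; pose tau' := downsets (flatten le).
have le_refl : reflexive le := spec_refl tau.
have le_trans : transitive le := spec_trans tau_top.
have tau'_top : is_topology tau' := downsets_topology _.
have spec_tau' : spec tau' =2 flatten le :=
  spec_downsets (flatten_refl le) (flatten_trans le_refl le_trans).
exists tau'; split => //.
  exists id; split; first by exists id.
  move=> x y; have := separated_spec tau_top i x y; have := separated_spec tau'_top i x y.
  have := eq_rel_separated i x y spec_tau'; have := flatten_separated le_refl le_trans i x y.
  rewrite /G_adj; tauto.
move=> s [uniq_s sorted_s]; apply: (sorted_flatten_size (le := le) uniq_s).
by apply: sub_sorted sorted_s => a b; rewrite (mset_subset_spec tau'_top) spec_tau'.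
Qed.
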